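(* $\displaystyle\lim_{N\to\infty,\ N\text{ even}}\frac{m^*_N}{2^{(N-1)/2}}=1.$ In particular, for large even $N$, quantum correlations certifying $N$ bits of device-independent randomness (via the strategies $S_{\theta^*_N}$ and expressions $I_{\theta^*_N}$) achieve MABK values arbitrarily close (in ratio) to the maximal quantum value $2^{(N-1)/2}$.
   Context: For even $N$: $\theta^*_N=2\pi t_N/(N+1)$ with $t_N=N/4+1/2,\ N/4,\ 3N/4+1/2,\ 3N/4+1$ according as $N\equiv2,4,6,0\pmod 8$, and $m^*_N=\langle M_N(\theta^*_N)\rangle$ where $\langle M_N(\theta)\rangle=2^{\frac{N-1}2}\big(\cos^N(\theta/2+\pi/4)\sin(N\theta/2+\pi/4)+\cos^N(\theta/2-\pi/4)\sin(N\theta/2-\pi/4)\big)$ is the MABK value of the strategy $S_\theta$ (state $(|0\rangle^{\otimes N}+i|1\rangle^{\otimes N})/\sqrt2$, $A_0^{(k)}=\sigma_X$, $A^{(k)}_1=\cos\theta\sigma_X+\sin\theta\sigma_Y$). The maximal quantum MABK value is $2^{(N-1)/2}$. *)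

From Stdlib Require Import Reals Lra Lia.
From Coquelicot Require Import Coquelicot.
Open Scope R_scope.

Definition qmax (N : nat) : R := Rpower 2 ((INR N - 1) / 2).

Definition MABK (N : nat) (theta : R) : R :=
  qmax N *
  ( (cos (theta / 2 + PI / 4)) ^ N * sin (INR N * theta / 2 + PI / 4)
  + (cos (theta / 2 - PI / 4)) ^ N * sin (INR N * theta / 2 - PI / 4)).

(* t_N for even N, according to N mod 8 (value for odd N is irrelevant). *)
Definition t_N (N : nat) : R :=
  match Nat.modulo N 8 with
  | 2%nat => INR N / 4 + 1 / 2
  | 4%nat => INR N / 4
  | 6%nat => 3 * INR N / 4 + 1 / 2
  | 0%nat => 3 * INR N / 4 + 1
  | _ => 0
  end.

Definition theta_star (N : nat) : R := 2 * PI * t_N N / (INR N + 1).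

Definition m_star (N : nat) : R := MABK N (theta_star N).

From Stdlib Require Import Reals Lra Lia.
From Coquelicot Require Import Coquelicot.
Open Scope R_scope.

(* Write n = N + 1, a(θ) = θ/2 + π/4 and δ_N = π / (4 (N + 1)).
   1. If (N + 1) θ is an odd multiple of 2π, the two sine factors of the
      normalized MABK value become -cos a(θ) and sin a(θ), and the cosine
      factors cos a(θ), sin a(θ); hence  <M_N(θ)> / 2^((N-1)/2)
      = sin^(N+1) a(θ) - cos^(N+1) a(θ).
   2. For even N, t_N is an odd integer with 4 t_N = N+1 ± 1 or 3(N+1) ± 1,
      so a(θ*_N) lies at distance δ_N from π/2 or from π.  Since N + 1 is
      odd, the normalized value is then cos^(N+1) δ_N ± sin^(N+1) δ_N.
   3. Elementary estimates sin^n δ <= δ and 1 - n δ² <= cos^n δ <= 1 bound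
      the distance of the ratio to 1 by (π/4 + π²/16) / (N+1).
   4. This bound tends to 0 along even N, and the theorem follows by
      squeezing. *)

(* The angular offset of the optimal angle from a multiple of π/2. *)
Definition delta (N : nat) : R := PI / (4 * (INR N + 1)).

Lemma qmax_pos (N : nat) : 0 < qmax N.
Proof. unfold qmax, Rpower. apply exp_pos. Qed.

Lemma normalized_MABK (N : nat) (theta : R) :
  MABK N theta / qmax N =
    cos (theta / 2 + PI / 4) ^ N * sin (INR N * theta / 2 + PI / 4)
  + cos (theta / 2 - PI / 4) ^ N * sin (INR N * theta / 2 - PI / 4).
Proof. unfold MABK. field. apply Rgt_not_eq, qmax_pos. Qed.

Lemma sin_odd_PI_sub (m : nat) (x : R) :
  sin (INR (2 * m + 1) * PI - x) = sin x.
Proof.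
  replace (INR (2 * m + 1) * PI - x) with ((PI - x) + 2 * INR m * PI)
    by (rewrite plus_INR, mult_INR; simpl; ring).
  now rewrite sin_period, sin_PI_x.
Qed.

Lemma normalized_MABK_resonant (N m : nat) (theta : R) :
  (INR N + 1) * theta = 2 * PI * INR (2 * m + 1) ->
  MABK N theta / qmax N =
    sin (theta / 2 + PI / 4) ^ (N + 1) - cos (theta / 2 + PI / 4) ^ (N + 1).
Proof.
  intros Hres. rewrite normalized_MABK.
  set (a := theta / 2 + PI / 4).
  assert (Hplus : INR N * theta / 2 + PI / 4
                  = INR (2 * m + 1) * PI - - (PI / 2 - a)) by (unfold a; nra).
  assert (Hminus : INR N * theta / 2 - PI / 4 = INR (2 * m + 1) * PI - a)
    by (unfold a; nra).
  assert (Hshift : theta / 2 - PI / 4 = - (PI / 2 - a)) by (unfold a; lra).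
  rewrite Hplus, Hminus, Hshift, !sin_odd_PI_sub, sin_neg, cos_neg,
    sin_shift, cos_shift, !pow_add.
  ring.
Qed.

Lemma pow_opp_odd (x : R) (m : nat) : (- x) ^ (2 * m + 1) = - x ^ (2 * m + 1).
Proof. rewrite !pow_add, !pow_mult. replace ((- x) ^ 2) with (x ^ 2) by ring. ring. Qed.

Lemma resonant_value_near_cos_pow (m : nat) (a d : R) :
  a = PI / 2 + d \/ a = PI / 2 - d \/ a = PI - d \/ a = PI + d ->
  Rabs (sin a ^ (2 * m + 1) - cos a ^ (2 * m + 1) - cos d ^ (2 * m + 1))
  = Rabs (sin d ^ (2 * m + 1)).
Proof.
  intros [-> | [-> | [-> | ->]]];
    rewrite ?sin_plus, ?cos_plus, ?sin_minus, ?cos_minus,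
      ?sin_PI2, ?cos_PI2, ?sin_PI, ?cos_PI.
  - replace (1 * cos d + 0 * sin d) with (cos d) by ring.
    replace (0 * cos d - 1 * sin d) with (- sin d) by ring.
    rewrite pow_opp_odd. f_equal. ring.
  - replace (1 * cos d - 0 * sin d) with (cos d) by ring.
    replace (0 * cos d + 1 * sin d) with (sin d) by ring.
    rewrite <- Rabs_Ropp. f_equal. ring.
  - replace (0 * cos d - -1 * sin d) with (sin d) by ring.
    replace (-1 * cos d + 0 * sin d) with (- cos d) by ring.
    rewrite pow_opp_odd. f_equal. ring.
  - replace (0 * cos d + -1 * sin d) with (- sin d) by ring.
    replace (-1 * cos d - 0 * sin d) with (- cos d) by ring.
    rewrite !pow_opp_odd, <- Rabs_Ropp. f_equal. ring.
Qed.

Lemma mod8 (j r : nat) : (r < 8)%nat -> Nat.modulo (8 * j + r) 8 = r.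
Proof.
  intros Hr. replace (8 * j + r)%nat with (r + j * 8)%nat by lia.
  rewrite Nat.Div0.mod_add. now apply Nat.mod_small.
Qed.

Lemma t_N_even (k : nat) :
  let N := (2 * k)%nat in
  exists m : nat, t_N N = INR (2 * m + 1) /\
    (4 * t_N N = INR N + 2 \/ 4 * t_N N = INR N
     \/ 4 * t_N N = 3 * INR N + 2 \/ 4 * t_N N = 3 * INR N + 4).
Proof.
  intros N.
  assert (HN : exists j, (N = 8 * j + 0 \/ N = 8 * j + 2
                          \/ N = 8 * j + 4 \/ N = 8 * j + 6)%nat).
  { exists (k / 4)%nat. pose proof (Nat.div_mod k 4 ltac:(lia)).
    pose proof (Nat.mod_upper_bound k 4 ltac:(lia)). unfold N. lia. }
  destruct HN as [j [-> | [-> | [-> | ->]]]]; unfold t_N; rewrite mod8 by lia;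
    rewrite ?plus_INR, ?mult_INR; simpl.
  - exists (3 * j)%nat. rewrite ?plus_INR, ?mult_INR. simpl.
    split; [lra | right; right; right; lra].
  - exists j. rewrite ?plus_INR, ?mult_INR. simpl.
    split; [lra | left; lra].
  - exists j. rewrite ?plus_INR, ?mult_INR. simpl.
    split; [lra | right; left; lra].
  - exists (3 * j + 2)%nat. rewrite ?plus_INR, ?mult_INR. simpl.
    split; [lra | right; right; left; lra].
Qed.

Lemma ratio_near_cos_pow (k : nat) :
  let N := (2 * k)%nat in
  Rabs (m_star N / qmax N - cos (delta N) ^ (N + 1))
  = Rabs (sin (delta N) ^ (N + 1)).
Proof.
  intros N.
  destruct (t_N_even k) as [m [Hodd Hphase]]; fold N in Hodd, Hphase.
  assert (HN : 0 <= INR N) by apply pos_INR.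
  assert (Hres : (INR N + 1) * theta_star N = 2 * PI * INR (2 * m + 1)).
  { unfold theta_star. rewrite Hodd. field. lra. }
  unfold m_star. rewrite (normalized_MABK_resonant _ _ _ Hres).
  replace (N + 1)%nat with (2 * k + 1)%nat by (unfold N; lia).
  apply resonant_value_near_cos_pow.
  unfold theta_star, delta.
  destruct Hphase as [Ht | [Ht | [Ht | Ht]]];
    [left | right; left | right; right; left | right; right; right];
    replace (t_N N) with (4 * t_N N / 4) by field; rewrite Ht; field; lra.
Qed.

Lemma bernoulli_lower (a : R) (n : nat) : 0 <= a <= 1 -> 1 - INR n * a <= (1 - a) ^ n.
Proof.
  intros Ha. induction n as [|n IH]; [simpl; lra |].
  rewrite S_INR. simpl pow. assert (0 <= INR n) by apply pos_INR. nra.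
Qed.

Lemma pow_le_1 (x : R) (n : nat) : 0 <= x <= 1 -> 0 <= x ^ n <= 1.
Proof. intros Hx. rewrite <- (pow1 n). split; [apply pow_le | apply pow_incr]; lra. Qed.

Lemma sin_between_0_x (x : R) : 0 <= x <= PI / 2 -> 0 <= sin x <= x.
Proof.
  intros Hx. pose proof PI_RGT_0. split.
  - apply sin_ge_0; lra.
  - destruct (Req_dec x 0) as [-> | Hx0]; [rewrite sin_0; lra |].
    apply Rlt_le, sin_lt_x. lra.
Qed.

Lemma sin_pow_le (n : nat) (x : R) : 0 <= x <= PI / 2 -> Rabs (sin x ^ S n) <= x.
Proof.
  intros Hx. destruct (sin_between_0_x x Hx) as [Hs0 Hsx].
  assert (Hs : 0 <= sin x ^ n <= 1) by (apply pow_le_1; pose proof (SIN_bound x); lra).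
  rewrite Rabs_right by (apply Rle_ge, pow_le; lra). simpl pow. nra.
Qed.

Lemma cos_pow_bounds (n : nat) (x : R) :
  0 <= x <= PI / 2 -> 1 - INR n * x ^ 2 <= cos x ^ n <= 1.
Proof.
  intros Hx. destruct (sin_between_0_x x Hx) as [Hs0 Hsx].
  assert (Hc : 0 <= cos x <= 1)
    by (split; [apply cos_ge_0; lra | apply COS_bound]).
  assert (Hgap : 1 - cos x <= x ^ 2).
  { pose proof (sin2_cos2 x) as Hpy. unfold Rsqr in Hpy. nra. }
  split; [| now apply pow_le_1].
  replace (cos x) with (1 - (1 - cos x)) at 1 by ring.
  assert (0 <= INR n) by apply pos_INR.
  pose proof (bernoulli_lower (1 - cos x) n ltac:(lra)). nra.
Qed.

Lemma ratio_close_to_1 (k : nat) :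
  let N := (2 * k)%nat in
  Rabs (m_star N / qmax N - 1) <= (PI / 4 + PI ^ 2 / 16) / (INR N + 1).
Proof.
  intros N.
  assert (HN : 0 <= INR N) by apply pos_INR.
  pose proof PI_RGT_0.
  assert (Hd : 0 <= delta N <= PI / 2).
  { unfold delta. split; [apply Rlt_le, Rdiv_lt_0_compat; lra |].
    apply Rmult_le_reg_r with (4 * (INR N + 1)); [lra |].
    field_simplify; nra. }
  assert (Hnear : Rabs (m_star N / qmax N - cos (delta N) ^ S N)
                  = Rabs (sin (delta N) ^ S N))
    by (rewrite <- Nat.add_1_r; apply ratio_near_cos_pow).
  pose proof (sin_pow_le N (delta N) Hd) as Hsin.
  pose proof (cos_pow_bounds (S N) (delta N) Hd) as Hcos. rewrite S_INR in Hcos.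
  assert (Hsq : (INR N + 1) * delta N ^ 2 = PI ^ 2 / 16 / (INR N + 1))
    by (unfold delta; field; lra).
  assert (Hlin : delta N = PI / 4 / (INR N + 1)) by (unfold delta; field; lra).
  replace (m_star N / qmax N - 1)
    with ((m_star N / qmax N - cos (delta N) ^ S N) + (cos (delta N) ^ S N - 1))
    by ring.
  eapply Rle_trans; [apply Rabs_triang |].
  rewrite Hnear, (Rabs_left1 (_ - 1)) by lra.
  replace ((PI / 4 + PI ^ 2 / 16) / (INR N + 1))
    with (PI / 4 / (INR N + 1) + PI ^ 2 / 16 / (INR N + 1)) by (field; lra).
  lra.
Qed.

Lemma lim_const_div_odd (C : R) : is_lim_seq (fun k : nat => C / (INR (2 * k) + 1)) 0.
Proof.
  assert (Hinf : is_lim_seq (fun k : nat => INR (2 * k) + 1) p_infty).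
  { apply is_lim_seq_le_p_loc with INR; [| apply is_lim_seq_INR].
    exists 0%nat. intros n _. rewrite mult_INR. simpl.
    assert (0 <= INR n) by apply pos_INR. lra. }
  pose proof (is_lim_seq_inv _ _ Hinf ltac:(discriminate)) as Hinv.
  pose proof (is_lim_seq_scal_l _ C _ Hinv) as Hscal. simpl in Hscal.
  rewrite Rmult_0_r in Hscal. exact Hscal.
Qed.

Lemma is_lim_seq_within (u v : nat -> R) (l : R) :
  (forall k, Rabs (u k - l) <= v k) -> is_lim_seq v 0 -> is_lim_seq u l.
Proof.
  intros Hclose Hv.
  apply is_lim_seq_le_le with (u := fun k => l - v k) (w := fun k => l + v k).
  - intros k. specialize (Hclose k). apply Rabs_le_between in Hclose. lra.
  - replace (Finite l) with (Rbar_minus l 0) by (simpl; f_equal; ring).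
    apply is_lim_seq_minus'; [apply is_lim_seq_const | exact Hv].
  - replace (Finite l) with (Rbar_plus l 0) by (simpl; f_equal; ring).
    apply is_lim_seq_plus'; [apply is_lim_seq_const | exact Hv].
Qed.

Theorem proposition6 :
  is_lim_seq (fun k : nat => m_star (2 * k) / qmax (2 * k)) 1.
Proof.
  apply is_lim_seq_within with
    (v := fun k : nat => (PI / 4 + PI ^ 2 / 16) / (INR (2 * k) + 1)).
  - intros k. exact (ratio_close_to_1 k).
  - apply lim_const_div_odd.
Qed.
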